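(* In Algorithm 7 (multi-user adversarial setting described in the context), the expected regret accumulated by the system during one collision resolution phase is upper bounded by $$\frac{K^2M^K}{\gamma}\le\frac{K^2M^KT^{y/2}}{\sqrt{M\ln M}}.$$
   Context: Setting: $K\le M$ users and $M\ge2$ channels, known horizon $T$, slotted synchronized time, no communication. In slot $t$ an adversary assigns each user $k$ and channel $m$ a reward $g^k_t(m)\in[0,1]$; a user that is alone on its chosen channel receives this reward, and if two or more users choose the same channel they all receive $0$ (so per-user per-slot regret is at most $1$). Algorithm 7 with parameter $y\in(0,1)$: let $\phi=\sqrt{\frac{\ln M}{MT^y}}$, $\eta=0.95\sqrt{\frac{\ln M}{MT^y}}$, $\gamma=1.05\sqrt{\frac{M\ln M}{T^y}}$. Each user $k$ keeps a probability vector $p^k$ over channels, initially uniform. The horizon is split into $T^y$ blocks of $T^{1-y}$ slots. At the start of a block there is a collision resolution phase: in each slot each not-yet-fixed user draws a channel from $p^k$; if it experiences no collision it becomes fixed and keeps that channel for the rest of the block. After the block, with $a$ the fixed channel and $g'^k(i)$ the average reward of channel $a$ over the remaining slots of the block, the user sets $\tilde g^k(i)=\frac{g'^k(i)\mathbb 1_{a=i}+\phi}{p^k(i)}$, adds it to the cumulative gain $\tilde G^k(i)$, and updates $p^k(i)=(1-\gamma)\frac{\exp(\eta\tilde G^k(i))}{\sum_{m=1}^M\exp(\eta\tilde G^k(m))}+\frac{\gamma}{M}$. The collision resolution phase lasts until all users are fixed. *)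

From HB Require Import structures.
From mathcomp Require Import all_boot all_order all_algebra.
From mathcomp Require Import all_classical all_reals all_analysis.
Set Implicit Arguments. Unset Strict Implicit. Unset Printing Implicit Defensive.
Import Order.TTheory GRing.Theory Num.Theory.
Local Open Scope ring_scope.

Definition alg7_gamma (R : realType) (M T : nat) (y : R) : R :=
  (105%:R / 100%:R) * Num.sqrt (M%:R * ln (M%:R : R) / ((T%:R : R) `^ y)).
Definition alg7_eta (R : realType) (M T : nat) (y : R) : R :=
  (95%:R / 100%:R) * Num.sqrt (ln (M%:R : R) / (M%:R * (T%:R : R) `^ y)).

(* The channel distribution p^k(i) of user k, given the cumulative
   estimated gains G k i (\tilde G^k(i)). *)
Definition alg7_prob (R : realType) (K M T : nat) (y : R)
    (G : 'I_K -> 'I_M -> R) (k : 'I_K) (i : 'I_M) : R :=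
  (1 - alg7_gamma M T y) *
    (expR (alg7_eta M T y * G k i) /
       \sum_(m < M) expR (alg7_eta M T y * G k m))
  + alg7_gamma M T y / M%:R.

(* State of a collision resolution phase: for each user, its fixed
   channel (Some m) or None if not yet fixed. *)
Definition crstate (K M : nat) := {ffun 'I_K -> option 'I_M}.
Definition crinit (K M : nat) : crstate K M := [ffun _ => None].
Definition all_fixed (K M : nat) (s : crstate K M) : bool :=
  [forall k, s k != None].

(* c = vector of channels actually played in a slot. *)
Definition alone (K M : nat) (c : {ffun 'I_K -> 'I_M}) (k : 'I_K) : bool :=
  [forall j, (j != k) ==> (c j != c k)].

Definition crstep (K M : nat) (s : crstate K M) (c : {ffun 'I_K -> 'I_M})
  : crstate K M :=
  [ffun k => if s k is Some m then Some m
             else if alone c k then Some (c k) else None].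

(* Probability that the played vector is c in state s: fixed users play
   their fixed channel, unfixed users draw independently from p k. *)
Definition crweight (R : realType) (K M : nat) (p : 'I_K -> 'I_M -> R)
    (s : crstate K M) (c : {ffun 'I_K -> 'I_M}) : R :=
  \prod_(k < K) (if s k is Some m then (c k == m)%:R else p k (c k)).

(* Law of the state at the start of slot n of the phase. *)
Fixpoint crdist (R : realType) (K M : nat) (p : 'I_K -> 'I_M -> R) (n : nat)
  : {ffun crstate K M -> R} :=
  match n with
  | 0 => [ffun s => (s == crinit K M)%:R]
  | n'.+1 => [ffun s' => \sum_(s : crstate K M) \sum_(c : {ffun 'I_K -> 'I_M})
                 crdist p n' s * crweight p s c * (crstep s c == s')%:R]
  end.

(* System regret in slot t (counted from the start of the phase) against
   a comparator allocation a, rewards g t k m in [0,1]; a user receives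
   its reward only if alone on its channel. *)
Definition slot_regret (R : realType) (K M : nat)
    (g : nat -> 'I_K -> 'I_M -> R) (a : 'I_K -> 'I_M) (t : nat)
    (c : {ffun 'I_K -> 'I_M}) : R :=
  \sum_(k < K) (g t k (a k) - (if alone c k then g t k (c k) else 0)).

(* Expected regret accumulated during the slots t < N that belong to the
   collision resolution phase (i.e. the state at the start of t is not
   all-fixed). *)
Definition phase_regret (R : realType) (K M : nat) (p : 'I_K -> 'I_M -> R)
    (g : nat -> 'I_K -> 'I_M -> R) (a : 'I_K -> 'I_M) (N : nat) : R :=
  \sum_(t < N) \sum_(s : crstate K M | ~~ all_fixed s)
     \sum_(c : {ffun 'I_K -> 'I_M})
       crdist p t s * crweight p s c * slot_regret g a t c.

From HB Require Import structures.
From mathcomp Require Import all_boot all_order all_algebra.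
From mathcomp Require Import all_classical all_reals all_analysis.
From mathcomp Require Import lra.
Set Implicit Arguments. Unset Strict Implicit. Unset Printing Implicit Defensive.
Import Order.TTheory GRing.Theory Num.Theory.
Local Open Scope ring_scope.

(* Track the number U of unfixed users.  In any state of the phase some
   user k0 is unfixed; the other users occupy fewer than M channels, so with
   probability at least (gamma / M) * M^-(K-1) user k0 draws a free channel
   while every other unfixed user draws a channel of probability >= 1/M.
   Hence E[U] drops by at least q = gamma * M^-K times the probability of
   still being in the phase.  As U starts at K and stays nonnegative, the
   expected phase length is at most K / q, and a slot costs at most K. *)

Lemma exists_ge_mean (R : realFieldType) (n : nat) (x : 'I_n -> R) :
  (0 < n)%N -> exists i, (\sum_j x j) / n%:R <= x i.
Proof.
move=> n_gt0; set mean := (\sum_j x j) / n%:R.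
apply/existsP; apply: contraT => /existsPn x_lt_mean.
have n_pos : (0 : R) < n%:R by rewrite ltr0n.
suff : \sum_j x j < \sum_(j < n) mean.
  by rewrite sumr_const card_ord -(mulr_natr mean) divfK ?gt_eqF ?ltxx.
apply: ltr_sum => [|j _]; last by rewrite ltNge x_lt_mean.
by apply/hasP; exists (Ordinal n_gt0); rewrite ?mem_index_enum.
Qed.

Lemma exists_avoiding_image (K M : nat) (k0 : 'I_K) (f : 'I_K -> 'I_M) :
  (K <= M)%N -> exists m, forall j, j != k0 -> f j != m.
Proof.
move=> le_KM; have /card_gt0P [m m_new] : (0 < #|~: (f @: [set~ k0])|)%N.
  rewrite -(ltn_add2l #|f @: [set~ k0]|) addn0 cardsC card_ord.
  apply: leq_ltn_trans (leq_imset_card _ _) _.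
  by rewrite cardsC1 card_ord; case: K k0 f le_KM => [[]|].
exists m => j j_neq; apply: contraTneq m_new => <-.
by rewrite inE negbK; apply: imset_f; rewrite !inE.
Qed.

Lemma slot_regret_le (R : realType) (K M : nat)
    (g : nat -> 'I_K -> 'I_M -> R) a t c :
  (forall t k m, 0 <= g t k m <= 1) -> slot_regret g a t c <= K%:R.
Proof.
move=> g01; rewrite -[K in K%:R]card_ord -sumr_const; apply: ler_sum => k _.
have /andP [_ g_a_le1] := g01 t k (a k).
have /andP [g_c_ge0 _] := g01 t k (c k).
by case: (alone c k); lra.
Qed.

Section CollisionResolution.

Variables (R : realType) (K M : nat) (p : 'I_K -> 'I_M -> R).
Hypothesis p_ge0 : forall k m, 0 <= p k m.
Hypothesis p_sum1 : forall k, \sum_m p k m = 1.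

Definition unfixed (s : crstate K M) : {set 'I_K} := [set k | s k == None].

Definition makes_progress (s : crstate K M) (c : {ffun 'I_K -> 'I_M}) : bool :=
  [exists k, (k \in unfixed s) && alone c k].

Lemma crweight_ge0 s c : 0 <= crweight p s c.
Proof. by apply: prodr_ge0 => k _; case: (s k) => [m|]. Qed.

Lemma crdist_ge0 n s : 0 <= crdist p n s.
Proof.
elim: n s => [|n IHn] s /=; rewrite ffunE // sumr_ge0 // => s0 _.
by rewrite sumr_ge0 // => c _; rewrite !mulr_ge0 ?IHn ?crweight_ge0.
Qed.

Lemma sum_crweight s : \sum_c crweight p s c = 1.
Proof.
pose F k m : R := if s k is Some m0 then (m == m0)%:R else p k m.
rewrite (eq_bigr (fun c : {ffun _ -> _} => \prod_k F k (c k))) // -bigA_distr_bigA /=.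
rewrite big1 // => k _; rewrite /F; case: (s k) => [m0|] //.
by rewrite (bigD1 m0) //= eqxx big1 ?addr0 // => m /negbTE ->.
Qed.

Lemma sum_crdist_crweight n s (x : R) :
  \sum_c crdist p n s * crweight p s c * x = crdist p n s * x.
Proof. by rewrite -big_distrl -big_distrr /= sum_crweight mulr1. Qed.

Lemma sum_crdist_succ (f : crstate K M -> R) n :
  \sum_s' crdist p n.+1 s' * f s'
  = \sum_s \sum_c crdist p n s * crweight p s c * f (crstep s c).
Proof.
under eq_bigr do rewrite ffunE big_distrl /=.
rewrite exchange_big; apply: eq_bigr => s _.
under eq_bigr do rewrite big_distrl /=.
rewrite exchange_big; apply: eq_bigr => c _.
rewrite (bigD1 (crstep s c)) //= eqxx mulr1 big1 ?addr0 // => s' s'_neq.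
by rewrite eq_sym (negbTE s'_neq) mulr0 mul0r.
Qed.

Lemma unfixed_crstep s c : unfixed (crstep s c) \subset unfixed s.
Proof.
apply/fintype.subsetP => k; rewrite !inE ffunE.
by case: (s k) => [m|] //; case: (alone c k).
Qed.

Lemma card_unfixed_crstep s c :
  (#|unfixed (crstep s c)| + makes_progress s c <= #|unfixed s|)%N.
Proof.
rewrite /makes_progress.
case: existsP => [[k0 /andP [k0_unfixed k0_alone]] | _] /=.
  rewrite addn1; apply: proper_card; rewrite properE unfixed_crstep /=.
  apply/fintype.subsetPn; exists k0 => //.
  by move: k0_unfixed; rewrite !inE ffunE => /eqP ->; rewrite k0_alone.
by rewrite addn0 subset_leq_card ?unfixed_crstep.
Qed.

Lemma makes_progress_prob_ge (gam : R) s :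
  (K <= M)%N -> 0 <= gam ->
  (forall k m, gam / M%:R <= p k m) ->
  (forall k, exists m, M%:R^-1 <= p k m) ->
  ~~ all_fixed s ->
  gam * M%:R^-1 ^+ K <= \sum_c crweight p s c * (makes_progress s c)%:R.
Proof.
move=> le_KM gam_ge0 p_ge_gam p_large /forallPn [k0].
rewrite negbK => /eqP s_k0.
have M_gt0 : (0 < M)%N := leq_trans (leq_ltn_trans (leq0n k0) (ltn_ord k0)) le_KM.
have [mj p_mj] := fin_all_exists p_large.
pose f j := if s j is Some m then m else mj j.
have [m0 m0_free] := exists_avoiding_image k0 f le_KM.
pose c0 : {ffun 'I_K -> 'I_M} := [ffun j => if j == k0 then m0 else f j].
have progress_c0 : makes_progress s c0.
  apply/existsP; exists k0; rewrite inE s_k0 eqxx /=.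
  apply/forallP => j; apply/implyP => j_neq; rewrite !ffunE (negbTE j_neq) eqxx.
  exact: m0_free.
rewrite (bigD1 c0) //= progress_c0 mulr1 -[X in X <= _]addr0 lerD //; last first.
  by apply: sumr_ge0 => c _; rewrite mulr_ge0 ?crweight_ge0.
have -> : gam * M%:R^-1 ^+ K = \prod_k (M%:R^-1 * (if k == k0 then gam else 1)).
  by rewrite big_split /= prodr_const card_ord -big_mkcond big_pred1_eq mulrC.
apply: ler_prod => k _; apply/andP; split.
  by case: ifP; rewrite mulr_ge0 ?invr_ge0.
rewrite ffunE; case: eqP => [-> | _]; first by rewrite s_k0 mulrC p_ge_gam.
rewrite mulr1 /f; case: (s k) => [m|]; last exact: p_mj.
by rewrite eqxx invf_le1 ?ler1n ?ltr0n.
Qed.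

Definition expected_unfixed n : R := \sum_s crdist p n s * #|unfixed s|%:R.

Definition prob_in_phase n : R := \sum_(s | ~~ all_fixed s) crdist p n s.

Lemma expected_unfixed0 : expected_unfixed 0 = K%:R.
Proof.
rewrite /expected_unfixed (bigD1 (crinit K M)) //= ffunE eqxx mul1r big1 ?addr0.
  have -> : unfixed (crinit K M) = [set: 'I_K] by apply/setP => k; rewrite !inE ffunE.
  by rewrite cardsT card_ord.
by move=> s s_neq; rewrite ffunE (negbTE s_neq) mul0r.
Qed.

Lemma expected_unfixed_ge0 n : 0 <= expected_unfixed n.
Proof. by apply: sumr_ge0 => s _; rewrite mulr_ge0 ?crdist_ge0. Qed.

Section Progress.

Variable q : R.
Hypothesis q_le_progress : forall s, ~~ all_fixed s ->
  q <= \sum_c crweight p s c * (makes_progress s c)%:R.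

Lemma expected_unfixed_succ n :
  expected_unfixed n.+1 + q * prob_in_phase n <= expected_unfixed n.
Proof.
have progress_ge : q * prob_in_phase n <=
    \sum_s \sum_c crdist p n s * crweight p s c * (makes_progress s c)%:R.
  rewrite /prob_in_phase big_distrr /=.
  rewrite [X in _ <= X](bigID (fun s => ~~ all_fixed s)) /=.
  rewrite -[X in X <= _]addr0 lerD //; last first.
    by do 2![apply: sumr_ge0 => ? _]; rewrite !mulr_ge0 ?crdist_ge0 ?crweight_ge0.
  apply: ler_sum => s s_in_phase; under eq_bigr do rewrite -mulrA.
  by rewrite -big_distrr /= mulrC ler_wpM2l ?crdist_ge0 ?q_le_progress.
rewrite /expected_unfixed sum_crdist_succ.
apply: le_trans (lerD (lexx _) progress_ge) _.
rewrite -big_split /=; apply: ler_sum => s _.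
rewrite -(sum_crdist_crweight n s) -big_split /=; apply: ler_sum => c _.
rewrite -mulrDr ler_wpM2l ?mulr_ge0 ?crdist_ge0 ?crweight_ge0 //.
by rewrite -natrD ler_nat card_unfixed_crstep.
Qed.

Lemma sum_prob_in_phase_le N : q * \sum_(t < N) prob_in_phase t <= K%:R.
Proof.
suff : q * \sum_(t < N) prob_in_phase t
       <= expected_unfixed 0 - expected_unfixed N.
  by rewrite expected_unfixed0; have := expected_unfixed_ge0 N; lra.
elim: N => [|N IHN]; first by rewrite big_ord0 mulr0 subrr.
by rewrite big_ord_recr /= mulrDr; have := expected_unfixed_succ N; lra.
Qed.

End Progress.

Lemma phase_regret_le (g : nat -> 'I_K -> 'I_M -> R) a N :
  (forall t k m, 0 <= g t k m <= 1) ->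
  phase_regret p g a N <= K%:R * \sum_(t < N) prob_in_phase t.
Proof.
move=> g01; rewrite /phase_regret big_distrr; apply: ler_sum => t _.
rewrite /prob_in_phase big_distrr; apply: ler_sum => s _ /=.
rewrite mulrC -(sum_crdist_crweight t s); apply: ler_sum => c _.
by rewrite ler_wpM2l ?mulr_ge0 ?crdist_ge0 ?crweight_ge0 ?slot_regret_le.
Qed.

Lemma phase_regret_le_progress (q : R) (g : nat -> 'I_K -> 'I_M -> R) a N :
  0 < q ->
  (forall s, ~~ all_fixed s ->
     q <= \sum_c crweight p s c * (makes_progress s c)%:R) ->
  (forall t k m, 0 <= g t k m <= 1) ->
  phase_regret p g a N <= K%:R ^+ 2 / q.
Proof.
move=> q_gt0 q_le_progress g01; apply: le_trans (phase_regret_le a N g01) _.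
rewrite expr2 -mulrA ler_wpM2l // ler_pdivlMr // mulrC.
exact: sum_prob_in_phase_le.
Qed.

End CollisionResolution.

Section Algorithm7.

Variables (R : realType) (K M T : nat) (y : R) (G : 'I_K -> 'I_M -> R).
Hypothesis M_ge2 : (2 <= M)%N.
Hypothesis T_gt0 : (0 < T)%N.

Let M_gt0 : (0 < M)%N. Proof. exact: leq_trans M_ge2. Qed.

Lemma sum_expR_gt0 (x : 'I_M -> R) : 0 < \sum_m expR (x m).
Proof.
rewrite (bigD1 (Ordinal M_gt0)) //= ltr_wpDr ?expR_gt0 //.
by apply: sumr_ge0 => m _; rewrite ltW ?expR_gt0.
Qed.

Lemma alg7_prob_ge :
  alg7_gamma M T y <= 1 ->
  forall k m, alg7_gamma M T y / M%:R <= alg7_prob T y G k m.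
Proof.
move=> gam_le1 k m; rewrite /alg7_prob lerDr mulr_ge0 ?subr_ge0 //.
by rewrite divr_ge0 ?ltW ?expR_gt0 ?sum_expR_gt0.
Qed.

Lemma alg7_prob_sum1 k : \sum_m alg7_prob T y G k m = 1.
Proof.
rewrite big_split /= -big_distrr -big_distrl /= divff ?gt_eqF ?sum_expR_gt0 //.
rewrite sumr_const card_ord -(mulr_natr (alg7_gamma M T y / M%:R)).
by rewrite divfK ?pnatr_eq0 -?lt0n // mulr1 subrK.
Qed.

Lemma alg7_gamma_sqrtE :
  alg7_gamma M T y
  = 105%:R / 100%:R * (Num.sqrt (M%:R * ln (M%:R : R)) / (T%:R : R) `^ (y / 2)).
Proof.
have T_pos : (0 : R) < T%:R by rewrite ltr0n.
rewrite powRrM powR12_sqrt ?powR_ge0 //.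
have MlnM_ge0 : (0 : R) <= M%:R * ln (M%:R : R).
  by rewrite mulr_ge0 // ln_ge0 // ler1n ltnW.
by rewrite /alg7_gamma sqrtrM ?sqrtrV ?powR_ge0.
Qed.

Lemma alg7_gamma_gt0 : 0 < alg7_gamma M T y.
Proof.
rewrite alg7_gamma_sqrtE mulr_gt0 ?divr_gt0 ?sqrtr_gt0 ?powR_gt0 ?ltr0n //.
by rewrite mulr_gt0 ?ltr0n // ln_gt0 // ltr1n.
Qed.

Lemma alg7_gamma_inv_le :
  (alg7_gamma M T y)^-1
  <= (T%:R : R) `^ (y / 2) / Num.sqrt (M%:R * ln (M%:R : R)).
Proof.
rewrite alg7_gamma_sqrtE invfM !invf_div.
apply: ler_piMl; first by rewrite divr_ge0 ?sqrtr_ge0 ?powR_ge0.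
by rewrite ler_pdivrMr ?ltr0n // mul1r ler_nat.
Qed.

End Algorithm7.

Unset Implicit Arguments.

Theorem theorem4 (R : realType) (K M T : nat) (y : R)
    (G : 'I_K -> 'I_M -> R) (g : nat -> 'I_K -> 'I_M -> R)
    (a : 'I_K -> 'I_M) :
  (2 <= M)%N -> (K <= M)%N -> (1 <= T)%N -> 0 < y < 1 ->
  alg7_gamma M T y <= 1 ->
  (forall t k m, 0 <= g t k m <= 1) ->
  (forall N : nat,
     phase_regret (alg7_prob T y G) g a N
       <= K%:R ^+ 2 * M%:R ^+ K / alg7_gamma M T y) /\
  K%:R ^+ 2 * M%:R ^+ K / alg7_gamma M T y
    <= K%:R ^+ 2 * M%:R ^+ K * (T%:R : R) `^ (y / 2)
         / Num.sqrt (M%:R * ln (M%:R : R)).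
Proof.
move=> M_ge2 le_KM T_gt0 _ gam_le1 g01. (* the bound holds for every real y *)
have M_gt0 : (0 < M)%N by apply: leq_trans M_ge2.
have gam_gt0 := alg7_gamma_gt0 y M_ge2 T_gt0.
set gam := alg7_gamma M T y in gam_le1 gam_gt0 *.
split=> [N|]; last first.
  rewrite -[X in _ <= X]mulrA ler_wpM2l ?mulr_ge0 ?exprn_ge0 //.
  exact: alg7_gamma_inv_le.
have p_ge_gam := alg7_prob_ge G M_ge2 gam_le1.
have p_ge0 k m : 0 <= alg7_prob T y G k m.
  by apply: le_trans (p_ge_gam k m); rewrite divr_ge0 // ltW.
have p_sum1 := alg7_prob_sum1 T y G M_ge2.
have p_ge_mean k : exists m, M%:R^-1 <= alg7_prob T y G k m.
  have [m] := exists_ge_mean (alg7_prob T y G k) M_gt0.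
  by rewrite p_sum1 mul1r; exists m.
have -> : K%:R ^+ 2 * M%:R ^+ K / gam = K%:R ^+ 2 / (gam * M%:R^-1 ^+ K).
  by rewrite exprVn invf_div mulrA.
apply: (phase_regret_le_progress p_ge0 p_sum1 a N _ _ g01).
  by rewrite mulr_gt0 ?exprn_gt0 ?invr_gt0 ?ltr0n.
move=> s.
exact: (makes_progress_prob_ge p_ge0 le_KM (ltW gam_gt0) p_ge_gam p_ge_mean).
Qed.
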